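(* Let $a,b,q$ be complex numbers with $|q|<1$, $b\neq0$, and let $G(z)=\sum_{n=0}^{\infty}t_nz^n\in\mathbb{C}[[z]]$. Define, for parameters $\alpha,\beta$, $$\widetilde{G}(z;\alpha,\beta):=\sum_{n=0}^\infty t_n z^n\frac{(\alpha z;q)_n}{(\beta z;q)_n}.$$ Then, as formal power series in $z$, $$\frac{(az;q)_\infty}{(bz;q)_\infty}G(z)=\sum_{n=0}^{\infty}\frac{(aq/b;q)_n(az;q)_n}{(q;q)_n(bz;q)_n}(bz)^nq^{n(n-1)}\Big(\widetilde{G}(zq^n;a,b)-azq^{2n}\,\widetilde{G}(zq^{n+1};a/q,b/q)\Big).$$
   Context: $(x;q)_\infty=\prod_{j\ge0}(1-xq^j)$ and $(x;q)_n=\prod_{j=0}^{n-1}(1-xq^j)$ for integers $n\ge0$; products and quotients of these with arguments multiples of $z$ are regarded as formal power series in $z$. *)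

From HB Require Import structures.
From mathcomp Require Import all_boot all_order all_algebra.
From mathcomp Require Import complex.
From mathcomp Require Import all_classical all_reals topology normedtype sequences.
Set Implicit Arguments. Unset Strict Implicit. Unset Printing Implicit Defensive.
Import Order.TTheory GRing.Theory Num.Theory.
Import numFieldNormedType.Exports.
Local Open Scope ring_scope.

(* Formal power series over a field C, given by their coefficient sequence:
   f k is the coefficient of z^k. *)
Definition fps (C : Type) := nat -> C.

Section FPS.
Variable C : numFieldType.

Definition fps_const (c : C) : fps C := fun k => if k == 0%N then c else 0.
Definition fps_Xn (n : nat) : fps C := fun k => if k == n then 1 else 0.
Definition fps_add (f g : fps C) : fps C := fun k => f k + g k.
Definition fps_sub (f g : fps C) : fps C := fun k => f k - g k.
Definition fps_scale (c : C) (f : fps C) : fps C := fun k => c * f k.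
Definition fps_mul (f g : fps C) : fps C :=
  fun k => \sum_(i < k.+1) f i * g (k - i)%N.
(* substitution z |-> c z *)
Definition fps_subst (c : C) (f : fps C) : fps C := fun k => c ^+ k * f k.

Fixpoint fps_inv_aux (f : fps C) (n : nat) : seq C :=
  match n with
  | 0%N => [:: (f 0%N)^-1]
  | n'.+1 => let s := fps_inv_aux f n' in
      rcons s (- (f 0%N)^-1 * \sum_(i < n'.+1) f i.+1 * nth 0 s (n' - i)%N)
  end.
Definition fps_inv (f : fps C) : fps C := fun k => nth 0 (fps_inv_aux f k) k.
Definition fps_div (f g : fps C) : fps C := fps_mul f (fps_inv g).

Definition fps_prod (n : nat) (F : nat -> fps C) : fps C :=
  foldr (fun j acc => fps_mul (F j) acc) (fps_const 1) (iota 0 n).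

Definition fps_lim (F : nat -> fps C) : fps C := fun k => limn (fun N => F N k).
Definition fps_series (F : nat -> fps C) : fps C :=
  fps_lim (fun N k => \sum_(n < N) F n k).

(* (x z; q)_n = prod_{j<n} (1 - x q^j z) as a formal power series in z *)
Definition qpoch_z (x q : C) (n : nat) : fps C :=
  fps_prod n (fun j => fps_sub (fps_const 1) (fps_scale (x * q ^+ j) (fps_Xn 1))).
(* (x z; q)_oo as a formal power series in z (coefficientwise limit) *)
Definition qpoch_z_inf (x q : C) : fps C := fps_lim (qpoch_z x q).
Definition qpoch (x q : C) (n : nat) : C := \prod_(j < n) (1 - x * q ^+ j).

Definition Gtilde (q : C) (t : nat -> C) (alpha beta : C) : fps C :=
  fps_series (fun n => fps_scale (t n)
    (fps_mul (fps_Xn n) (fps_div (qpoch_z alpha q n) (qpoch_z beta q n)))).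
End FPS.

(* Let H(z) = (az;q)_oo/(bz;q)_oo and r_n(z) = (az;q)_n/(bz;q)_n.  Since q^k <> 1
   for k > 0, a series f is determined by f(0) and the q-difference equation
   (1 - bz) f(z) = (1 - az) f(qz), which H satisfies; iterating it gives
   H(z) = r_m(z) H(q^m z).  The series  sum_n kappa_n z^n r_n(z) (1 - a q^(2n) z),
   kappa_n = (aq/b;q)_n b^n q^(n(n-1)) / (q;q)_n, has constant term 1 and, after a
   telescoping reindexation, satisfies the same equation, so it equals H.  Hence
   H(z) G(z) = sum_m t_m z^m r_m(z) H(q^m z) is a double series; exchanging the two
   summations and collecting the n-th terms gives the right-hand side. *)

From HB Require Import structures.
From mathcomp Require Import all_boot all_order all_algebra.
From mathcomp Require Import complex.
From mathcomp Require Import all_classical all_reals topology normedtype sequences.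
From mathcomp Require Import ring zify.
Set Implicit Arguments. Unset Strict Implicit. Unset Printing Implicit Defensive.
Import Order.TTheory GRing.Theory Num.Theory.
Import numFieldNormedType.Exports.
Local Open Scope classical_set_scope.
Local Open Scope ring_scope.

Section FpsRing.
Variable C : numFieldType.
Implicit Types (f g h : fps C) (c d : C).

HB.instance Definition _ := Choice.copy (fps C) (nat -> C).

Definition fps0 : fps C := fun _ => 0.
Definition fps_opp f : fps C := fun k => - f k.

Lemma fps_addA : associative (@fps_add C).
Proof. by move=> f g h; apply/funext=> k; rewrite /fps_add addrA. Qed.

Lemma fps_addC : commutative (@fps_add C).
Proof. by move=> f g; apply/funext=> k; rewrite /fps_add addrC. Qed.

Lemma fps_add0 : left_id fps0 (@fps_add C).
Proof. by move=> f; apply/funext=> k; rewrite /fps_add add0r. Qed.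

Lemma fps_addN : left_inverse fps0 fps_opp (@fps_add C).
Proof. by move=> f; apply/funext=> k; rewrite /fps_add /fps_opp addNr. Qed.

HB.instance Definition _ := GRing.isZmodule.Build (fps C)
  fps_addA fps_addC fps_add0 fps_addN.

Lemma fps_mul_rev f g k : fps_mul f g k = \sum_(j < k.+1) f (k - j)%N * g j.
Proof.
rewrite /fps_mul (reindex_inj rev_ord_inj) /=; apply: eq_bigr => j _.
by rewrite subKn ?leq_ord.
Qed.

Lemma fps_mulC : commutative (@fps_mul C).
Proof.
by move=> f g; apply/funext=> k; rewrite fps_mul_rev; apply: eq_bigr => i _; rewrite mulrC.
Qed.

Lemma fps_mulA : associative (@fps_mul C).
Proof.
move=> f g h; apply/funext=> k; rewrite [in RHS]fps_mul_rev {1}/fps_mul.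
pose c3 i j := f i * (g (k - i - j)%N * h j).
transitivity (\sum_(i < k.+1) \sum_(j < k.+1 | (j <= k - i)%N) c3 i j).
  apply: eq_bigr => /= i _; rewrite fps_mul_rev big_distrr /=.
  by rewrite (big_ord_narrow_leq (leq_subr _ _)).
rewrite (exchange_big_dep predT) //=; apply: eq_bigr => j _.
transitivity (\sum_(i < k.+1 | (i <= k - j)%N) c3 i j).
  by apply: eq_bigl => i; apply/idP/idP; have := ltn_ord i; have := ltn_ord j; lia.
rewrite (big_ord_narrow_leq (leq_subr _ _)) /fps_mul big_distrl /=.
by apply: eq_bigr => i _; rewrite /c3 -!subnDA addnC mulrA.
Qed.

Lemma fps_mul1 : left_id (fps_const 1) (@fps_mul C).
Proof.
move=> f; apply/funext=> k; rewrite /fps_mul big_ord_recl /= mul1r subn0.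
by rewrite big1 ?addr0 // => i _; rewrite mul0r.
Qed.

Lemma fps_mulDl : left_distributive (@fps_mul C) (@fps_add C).
Proof.
move=> f g h; apply/funext=> k; rewrite /fps_mul /fps_add -big_split /=.
by apply: eq_bigr => i _; rewrite mulrDl.
Qed.

Lemma fps_const1_neq0 : fps_const 1 != fps0.
Proof. by apply/eqP => /(congr1 (fun f => f 0%N)) /eqP; rewrite oner_eq0. Qed.

HB.instance Definition _ := GRing.Zmodule_isComNzRing.Build (fps C)
  fps_mulA fps_mulC fps_mul1 fps_mulDl fps_const1_neq0.

Lemma fps_mulE f g : fps_mul f g = f * g. Proof. by []. Qed.
Lemma fps_subE f g : fps_sub f g = f - g. Proof. by []. Qed.
Lemma fps_coefB f g k : (f - g) k = f k - g k. Proof. by []. Qed.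
Lemma fps_coef1 k : (1 : fps C) k = if k == 0%N then 1 else 0. Proof. by []. Qed.
Lemma fps_coefM f g k : (f * g) k = \sum_(i < k.+1) f i * g (k - i)%N. Proof. by []. Qed.
Lemma fps_coefM0 f g : (f * g) 0%N = f 0%N * g 0%N. Proof. by rewrite fps_coefM big_ord1. Qed.

Lemma fps_inv_aux_size f n : size (fps_inv_aux f n) = n.+1.
Proof. by elim: n => //= n IH; rewrite size_rcons IH. Qed.

Lemma nth_fps_inv_aux f n i : (i <= n)%N -> nth 0 (fps_inv_aux f n) i = fps_inv f i.
Proof.
elim: n => [|n IH]; first by rewrite leqn0 => /eqP ->.
rewrite leq_eqVlt => /orP [/eqP -> //|]; rewrite ltnS => lein.
by rewrite /= nth_rcons fps_inv_aux_size ltnS lein IH.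
Qed.

Lemma fps_invS f n : fps_inv f n.+1 =
  - (f 0%N)^-1 * \sum_(i < n.+1) f i.+1 * fps_inv f (n - i)%N.
Proof.
rewrite /fps_inv /= nth_rcons fps_inv_aux_size ltnn eqxx; congr (_ * _).
by apply: eq_bigr => i _; rewrite nth_fps_inv_aux // leq_subr.
Qed.

Lemma fps_mulVf f : f 0%N != 0 -> fps_inv f * f = 1.
Proof.
move=> f0; apply/funext => -[|n]; rewrite mulrC fps_coefM fps_coef1.
  by rewrite big_ord1 /fps_inv /= divff.
rewrite big_ord_recl /= subn0 fps_invS.
under eq_bigr do rewrite subSS.
by rewrite mulrA mulrN divff // mulN1r addNr.
Qed.

Definition fps_unit : {pred fps C} := fun f => f 0%N != 0.
Definition fps_invr f : fps C := if f 0%N != 0 then fps_inv f else f.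

Lemma fps_mulVr : {in fps_unit, left_inverse 1 fps_invr *%R}.
Proof. by move=> f uf; rewrite /fps_invr ifT ?fps_mulVf. Qed.

Lemma fps_unitPl f g : g * f = 1 -> fps_unit f.
Proof.
move=> /(congr1 (fun h => h 0%N)); rewrite fps_coefM0 fps_coef1 /= => gf1.
by apply/eqP => f0; move: gf1; rewrite f0 mulr0 => /eqP; rewrite eq_sym oner_eq0.
Qed.

Lemma fps_invr_out : {in [predC fps_unit], fps_invr =1 id}.
Proof. by move=> f; rewrite unfold_in /= unfold_in /fps_invr /= => /negbTE ->. Qed.

HB.instance Definition _ := GRing.ComNzRing_hasMulInverse.Build (fps C)
  fps_mulVr fps_unitPl fps_invr_out.

Lemma fps_unitE f : (f \is a GRing.unit) = (f 0%N != 0). Proof. by []. Qed.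

Lemma fps_coefV0 f : f \is a GRing.unit -> (f^-1) 0%N = (f 0%N)^-1.
Proof.
move=> u; have f0 : f 0%N != 0 := u.
by apply: (mulIf f0); rewrite -fps_coefM0 mulVr // mulVf.
Qed.

Lemma fps_divE f g : g 0%N != 0 -> fps_div f g = f / g.
Proof. by move=> g0; rewrite /fps_div /GRing.inv /= /fps_invr g0. Qed.

End FpsRing.

Section FpsMorphisms.
Variable C : numFieldType.
Implicit Types (f g : fps C) (c x : C).

Lemma fps_coefCM c f k : (fps_const c * f) k = c * f k.
Proof.
rewrite fps_coefM big_ord_recl /= {1}/fps_const /= subn0 big1 ?addr0 //.
by move=> i _; rewrite /fps_const /= mul0r.
Qed.

Lemma fps_const_is_additive : additive (@fps_const C).
Proof.
by move=> c d; apply/funext => k; rewrite /fps_const fps_coefB; case: eqP; rewrite ?subrr.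
Qed.

Lemma fps_const_is_multiplicative : multiplicative (@fps_const C).
Proof.
split => // c d; apply/funext => k.
by rewrite fps_coefCM /fps_const; case: eqP; rewrite ?mulr0.
Qed.

HB.instance Definition _ := GRing.isAdditive.Build C (fps C) (@fps_const C)
  fps_const_is_additive.
HB.instance Definition _ := GRing.isMultiplicative.Build C (fps C) (@fps_const C)
  fps_const_is_multiplicative.

Lemma fps_scaleE c f : fps_scale c f = fps_const c * f.
Proof. by apply/funext => k; rewrite fps_coefCM. Qed.

Definition fpsX : fps C := fps_Xn C 1.

Lemma fps_coefXM f k : (fpsX * f) k = if k is k'.+1 then f k' else 0.
Proof.
rewrite fps_coefM; case: k => [|k]; first by rewrite big_ord1 /fpsX /fps_Xn mul0r.
rewrite big_ord_recl /fpsX /fps_Xn /= mul0r add0r big_ord_recl /= subSS subn0 mul1r.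
by rewrite big1 ?addr0 // => i _; rewrite mul0r.
Qed.

Lemma fps_coefXnM n f k : (fpsX ^+ n * f) k = if (n <= k)%N then f (k - n)%N else 0.
Proof.
elim: n k => [|n IH] k; first by rewrite expr0 mul1r subn0.
by rewrite exprS -mulrA fps_coefXM; case: k => [|k] //; rewrite IH ltnS subSS.
Qed.

Lemma fps_XnE n : fps_Xn C n = fpsX ^+ n.
Proof.
apply/funext => k; rewrite -[fpsX ^+ n]mulr1 fps_coefXnM fps_coef1 /fps_Xn.
by case: (ltngtP n k) => [lt|//|->]; rewrite ?subnn // subn_eq0 leqNgt lt.
Qed.

Lemma fps_subst_is_additive c : additive (@fps_subst C c).
Proof. by move=> f g; apply/funext => k; rewrite /fps_subst fps_coefB mulrBr. Qed.

Lemma fps_subst_is_multiplicative c : multiplicative (@fps_subst C c).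
Proof.
split; last by apply/funext => -[|k]; rewrite /fps_subst fps_coef1 ?mulr0 ?mul1r.
move=> f g; apply/funext => k; rewrite /fps_subst !fps_coefM big_distrr /=.
by apply: eq_bigr => i _; rewrite mulrACA -exprD subnKC // -ltnS.
Qed.

HB.instance Definition _ c := GRing.isAdditive.Build (fps C) (fps C) (@fps_subst C c)
  (fps_subst_is_additive c).
HB.instance Definition _ c := GRing.isMultiplicative.Build (fps C) (fps C) (@fps_subst C c)
  (fps_subst_is_multiplicative c).

Lemma fps_substM c f g : fps_subst c (f * g) = fps_subst c f * fps_subst c g.
Proof. exact: rmorphM. Qed.

Lemma fps_subst_coef0 c f : fps_subst c f 0%N = f 0%N.
Proof. by rewrite /fps_subst mul1r. Qed.

Lemma fps_subst_unit c f : (fps_subst c f \is a GRing.unit) = (f \is a GRing.unit).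
Proof. by rewrite !fps_unitE fps_subst_coef0. Qed.

Lemma fps_substC c x : fps_subst c (fps_const x) = fps_const x.
Proof. by apply/funext => -[|k]; rewrite /fps_subst /fps_const ?mulr0 ?mul1r. Qed.

Lemma fps_substXn c n : fps_subst c (fpsX ^+ n) = fps_const (c ^+ n) * fpsX ^+ n.
Proof.
apply/funext => k; rewrite fps_coefCM /fps_subst -fps_XnE /fps_Xn.
by case: eqP => [->|]; rewrite ?mulr0.
Qed.

Lemma fps_substX c : fps_subst c fpsX = fps_const c * fpsX.
Proof. by rewrite -[fpsX]expr1 fps_substXn. Qed.

Lemma fps_subst_CXnM c d n f :
  fps_subst c (fps_const d * (fpsX ^+ n * f)) =
  fps_const (d * c ^+ n) * (fpsX ^+ n * fps_subst c f).
Proof. by rewrite !fps_substM fps_substC fps_substXn rmorphM -!mulrA. Qed.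

Lemma fps_subst_comp c d f : fps_subst c (fps_subst d f) = fps_subst (c * d) f.
Proof. by apply/funext => k; rewrite /fps_subst mulrA exprMn. Qed.

Lemma fps_subst1 f : fps_subst 1 f = f.
Proof. by apply/funext => k; rewrite /fps_subst expr1n mul1r. Qed.

Definition fps_lin x : fps C := 1 - fps_const x * fpsX.

Lemma fps_lin_coef0 x : fps_lin x 0%N = 1.
Proof. by rewrite /fps_lin fps_coefB fps_coefCM /fpsX /fps_Xn /= mulr0 subr0. Qed.

Lemma fps_lin_unit x : fps_lin x \is a GRing.unit.
Proof. by rewrite fps_unitE fps_lin_coef0 oner_eq0. Qed.

Lemma fps_subst_lin c x : fps_subst c (fps_lin x) = fps_lin (x * c).
Proof.
by rewrite /fps_lin rmorphB rmorph1 rmorphM /= fps_substC fps_substX mulrA -rmorphM.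
Qed.

Lemma fps_coef_linM x f k :
  (fps_lin x * f) k = if k is k'.+1 then f k - x * f k' else f k.
Proof.
rewrite /fps_lin mulrBl mul1r fps_coefB -mulrA fps_coefCM fps_coefXM.
by case: k; rewrite ?mulr0 ?subr0.
Qed.

End FpsMorphisms.

Section Series.
Variable C : numFieldType.
Implicit Types (f g : fps C) (c : C) (F G : nat -> fps C).

Definition ord_ge n f := forall k, (k < n)%N -> f k = 0.

Lemma ord_ge0 f : ord_ge 0 f. Proof. by []. Qed.

Lemma ord_ge_leq m n f : (m <= n)%N -> ord_ge n f -> ord_ge m f.
Proof. by move=> le_mn fn k lt_km; apply: fn; apply: leq_trans lt_km le_mn. Qed.

Lemma ord_ge_Xn n : ord_ge n (fpsX C ^+ n).
Proof. by move=> k lt_kn; rewrite -[_ ^+ n]mulr1 fps_coefXnM leqNgt lt_kn. Qed.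

Lemma ord_geB n f g : ord_ge n f -> ord_ge n g -> ord_ge n (f - g).
Proof. by move=> fn gn k lt_kn; rewrite fps_coefB fn ?gn ?subr0. Qed.

Lemma ord_geM m n f g : ord_ge m f -> ord_ge n g -> ord_ge (m + n) (f * g).
Proof.
move=> fm gn k lt_k; rewrite fps_coefM big1 // => i _.
have [lt_im|le_mi] := ltnP i m; first by rewrite fm ?mul0r.
by rewrite gn ?mulr0 //; have := ltn_ord i; lia.
Qed.

Lemma ord_geMl n f g : ord_ge n f -> ord_ge n (g * f).
Proof. by move/(ord_geM (ord_ge0 g)). Qed.

Lemma ord_geMr n f g : ord_ge n f -> ord_ge n (f * g).
Proof. by rewrite mulrC; apply: ord_geMl. Qed.

Lemma ord_ge_subst n c f : ord_ge n f -> ord_ge n (fps_subst c f).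
Proof. by move=> fn k lt_kn; rewrite /fps_subst fn ?mulr0. Qed.

(* When the n-th term has order at least n, the partial sums defining each
   coefficient of [fps_series F] are eventually constant. *)
Definition ord_ge_seq F := forall n, ord_ge n (F n).

Lemma fps_series_coef_ge F N k : ord_ge_seq F -> (k < N)%N ->
  fps_series F k = \sum_(n < N) F n k.
Proof.
move=> ordF lt_kN; rewrite /fps_series /fps_lim.
apply: (lim_near_cst (@norm_hausdorff _ _)).
have trunc M : (k < M)%N -> \sum_(n < M) F n k = \sum_(n < k.+1) F n k.
  move=> lt_kM; rewrite -(subnKC lt_kM) big_split_ord /= [X in _ + X]big1 ?addr0 //.
  by move=> i _; apply: ordF; rewrite ltnS leq_addr.
by exists k.+1 => // M /= le_kM; rewrite !trunc.
Qed.

Lemma fps_series_coef F k : ord_ge_seq F -> fps_series F k = \sum_(n < k.+1) F n k.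
Proof. by move=> ordF; apply: fps_series_coef_ge. Qed.

Lemma eq_fps_series F G : F =1 G -> fps_series F = fps_series G.
Proof. by move=> /funext ->. Qed.

Lemma fps_series_mull f F : ord_ge_seq F ->
  f * fps_series F = fps_series (fun n => f * F n).
Proof.
move=> ordF; apply/funext => k.
rewrite fps_series_coef => [|n]; last exact: ord_geMl.
rewrite fps_coefM.
under eq_bigr => i _ do rewrite (@fps_series_coef_ge F k.+1) ?ltnS ?leq_subr // big_distrr /=.
by rewrite exchange_big.
Qed.

Lemma fps_seriesB F G : ord_ge_seq F -> ord_ge_seq G ->
  fps_series (fun n => F n - G n) = fps_series F - fps_series G.
Proof.
move=> ordF ordG; apply/funext => k; rewrite fps_coefB !fps_series_coef ?sumrB //.
by move=> n; apply: ord_geB.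
Qed.

Lemma fps_subst_series c F : ord_ge_seq F ->
  fps_subst c (fps_series F) = fps_series (fun n => fps_subst c (F n)).
Proof.
move=> ordF; apply/funext => k.
rewrite /fps_subst !fps_series_coef ?big_distrr // => n.
exact: ord_ge_subst.
Qed.

Lemma exchange_fps_series (A : nat -> nat -> fps C) :
  (forall n m, ord_ge (n + m) (A n m)) ->
  fps_series (fun n => fps_series (A n)) =
  fps_series (fun m => fps_series (A^~ m)).
Proof.
move=> ordA.
have ordAl n : ord_ge_seq (A n) by move=> m; apply: ord_ge_leq (ordA n m); apply: leq_addl.
have ordAr m : ord_ge_seq (A^~ m) by move=> n; apply: ord_ge_leq (ordA n m); apply: leq_addr.
apply/funext => k; rewrite !fps_series_coef => [|m j lt_jm|n j lt_jn].
- under eq_bigr do rewrite (@fps_series_coef_ge _ k.+1) //.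
  by rewrite exchange_big; apply: eq_bigr => m _; rewrite (@fps_series_coef_ge _ k.+1).
- rewrite fps_series_coef // big1 // => n _.
  by apply: ordA; apply: leq_trans lt_jm (leq_addl _ _).
- rewrite fps_series_coef // big1 // => m _.
  by apply: ordA; apply: leq_trans lt_jn (leq_addr _ _).
Qed.

Lemma fps_series_telescope F : ord_ge_seq F ->
  fps_series (fun n => F n - F n.+1) = F 0%N.
Proof.
move=> ordF; apply/funext => k.
rewrite fps_series_coef => [|n]; last by apply: ord_geB => //; apply: ord_ge_leq (ordF n.+1).
suff -> N : \sum_(n < N) (F n - F n.+1) k = F 0%N k - F N k by rewrite (ordF k.+1) ?subr0.
elim: N => [|N IH]; first by rewrite big_ord0 subrr.
by rewrite big_ord_recr /= IH fps_coefB addrA subrK.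
Qed.

Lemma fps_series_monomials (t : nat -> C) :
  t = fps_series (fun m => fps_const (t m) * fpsX C ^+ m).
Proof.
apply/funext => k; rewrite fps_series_coef => [|n]; last exact/ord_geMl/ord_ge_Xn.
rewrite big_ord_recr /= big1 ?add0r => [|i _].
  by rewrite mulrC fps_coefXnM leqnn subnn.
by rewrite mulrC fps_coefXnM; case: leqP => // _; rewrite /fps_const subn_eq0 leqNgt ltn_ord.
Qed.

End Series.

Ltac ord_ge_tac := first
  [ exact: ord_ge_Xn | exact: ord_ge0
  | apply: ord_geB; ord_ge_tac | apply: ord_ge_subst; ord_ge_tac
  | apply: ord_geMl; ord_ge_tac | apply: ord_geMr; ord_ge_tac
  | apply: ord_geM; ord_ge_tac
  | intro; ord_ge_tac ].

Section QPochhammer.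
Variable C : numFieldType.
Variable q : C.
Implicit Types x : C.

Lemma qpochS x n : qpoch x q n.+1 = qpoch x q n * (1 - x * q ^+ n).
Proof. by rewrite /qpoch big_ord_recr. Qed.

Lemma qpoch_zE x n : qpoch_z x q n = \prod_(j < n) fps_lin (x * q ^+ j).
Proof.
rewrite /qpoch_z /fps_prod -(big_mkord xpredT (fun j => fps_lin (x * q ^+ j))).
rewrite /index_iota subn0; elim: (iota 0 n) => [|j r IH]; first by rewrite big_nil.
by rewrite big_cons /= IH fps_scaleE.
Qed.

Lemma qpoch_z_coef0 x n : qpoch_z x q n 0%N = 1.
Proof.
rewrite qpoch_zE; elim: n => [|n IH]; first by rewrite big_ord0.
by rewrite big_ord_recr /= fps_coefM0 IH fps_lin_coef0 mulr1.
Qed.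

Lemma qpoch_z_unit x n : qpoch_z x q n \is a GRing.unit.
Proof. by rewrite fps_unitE qpoch_z_coef0 oner_eq0. Qed.

Lemma qpoch_z0 x : qpoch_z x q 0 = 1.
Proof. by rewrite qpoch_zE big_ord0. Qed.

Lemma qpoch_z1 x : qpoch_z x q 1 = fps_lin x.
Proof. by rewrite qpoch_zE big_ord1 mulr1. Qed.

Lemma qpoch_zD x n m :
  qpoch_z x q (n + m) = qpoch_z x q n * fps_subst (q ^+ n) (qpoch_z x q m).
Proof.
rewrite !qpoch_zE big_split_ord rmorph_prod /=; congr (_ * _).
by apply: eq_bigr => j _; rewrite fps_subst_lin -mulrA -exprD addnC.
Qed.

Lemma qpoch_zS x n : qpoch_z x q n.+1 = fps_lin x * fps_subst q (qpoch_z x q n).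
Proof. by rewrite -add1n qpoch_zD qpoch_z1. Qed.

Lemma qpoch_zSr x n : qpoch_z x q n.+1 = qpoch_z x q n * fps_lin (x * q ^+ n).
Proof. by rewrite !qpoch_zE big_ord_recr. Qed.

Lemma qpoch_z_coefS x N k :
  (1 - q ^+ k.+1) * qpoch_z x q N k.+1 = x * (q ^+ N - q ^+ k) * qpoch_z x q N k.
Proof.
have := congr1 (fun f => f k.+1) (qpoch_zS x N).
rewrite qpoch_zSr mulrC !fps_coef_linM /fps_subst.
move: (qpoch_z x q N k.+1) (qpoch_z x q N k) => u v E.
rewrite (_ : _ * u = u - x * q ^+ N * v - q ^+ k.+1 * u + x * q ^+ N * v); last by ring.
by rewrite E; ring.
Qed.

Hypothesis qpow_cvg0 : (fun N => q ^+ N) @ \oo --> (0 : C).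

Lemma qpow_neq1 k : q ^+ k.+1 != 1.
Proof.
apply/eqP => qk1; have normq1 : `|q| = 1.
  by apply/eqP; rewrite -(pexpr_eq1 (ltn0Sn k)) // -normrX qk1 normr1.
have [N _ /(_ N (leqnn N))] := (cvgr0Pnorm_lt _).1 qpow_cvg0 1 ltr01.
by rewrite normrX normq1 expr1n ltxx.
Qed.

Lemma qpoch_qq_neq0 n : qpoch q q n != 0.
Proof. by apply/prodf_neq0 => i _; rewrite -exprS subr_eq0 eq_sym qpow_neq1. Qed.

Lemma qpoch_z_coef_cvg x k : cvgn (fun N => qpoch_z x q N k).
Proof.
elim: k => [|k IH].
  by under eq_fun do rewrite qpoch_z_coef0; apply: is_cvg_cst.
have qk1 : 1 - q ^+ k.+1 != 0 by rewrite subr_eq0 eq_sym qpow_neq1.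
have -> : (fun N => qpoch_z x q N k.+1) =
    (fun N => x * (q ^+ N - q ^+ k) / (1 - q ^+ k.+1) * qpoch_z x q N k).
  by apply/funext => N; apply: (mulfI qk1); rewrite qpoch_z_coefS; field.
apply: is_cvgM IH; apply: is_cvgMr_tmp; apply: is_cvgMl_tmp.
by apply: is_cvgB; [exact: cvgP qpow_cvg0|exact: is_cvg_cst].
Qed.

Lemma qpoch_z_inf_coef0 x : qpoch_z_inf x q 0%N = 1.
Proof.
rewrite /qpoch_z_inf /fps_lim; under eq_fun do rewrite qpoch_z_coef0.
exact: lim_cst.
Qed.

Lemma qpoch_z_inf_rec x : qpoch_z_inf x q = fps_lin x * fps_subst q (qpoch_z_inf x q).
Proof.
apply/funext => -[|k]; rewrite fps_coef_linM /fps_subst ?mul1r //.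
suff : (1 - q ^+ k.+1) * qpoch_z_inf x q k.+1 = x * (0 - q ^+ k) * qpoch_z_inf x q k.
  move: (qpoch_z_inf x q k.+1) (qpoch_z_inf x q k) => u v rel.
  rewrite {1}(_ : u = (1 - q ^+ k.+1) * u + q ^+ k.+1 * u); last by ring.
  by rewrite rel; ring.
have lim_rel : (1 - q ^+ k.+1) * qpoch_z x q N k.+1 @[N --> \oo] -->
    x * (0 - q ^+ k) * qpoch_z_inf x q k.
  under eq_fun do rewrite qpoch_z_coefS.
  apply: cvgM; last exact: qpoch_z_coef_cvg.
  by apply: cvgMl_tmp; apply: cvgB => //; exact: cvg_cst.
apply: (cvg_unique _ _ lim_rel) => //.
by apply: cvgMl_tmp; apply: qpoch_z_coef_cvg.
Qed.

End QPochhammer.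

Section QRatio.
Variable C : numFieldType.
Variable q : C.
Hypothesis qpow_cvg0 : (fun N => q ^+ N) @ \oo --> (0 : C).
Implicit Types (x y : C) (f g : fps C).

Lemma qdiff_eq_uniq x y f g :
  fps_lin y * f = fps_lin x * fps_subst q f ->
  fps_lin y * g = fps_lin x * fps_subst q g ->
  f 0%N = g 0%N -> f = g.
Proof.
move=> Ef Eg fg0; apply/subr0_eq/funext.
have Eh : fps_lin y * (f - g) = fps_lin x * fps_subst q (f - g).
  by rewrite rmorphB !mulrBr Ef Eg.
elim=> [|k IH]; first by rewrite fps_coefB fg0 subrr.
have := congr1 (fun h => h k.+1) Eh; rewrite !fps_coef_linM /fps_subst IH /= !mulr0 !subr0.
move=> /eqP; rewrite -subr_eq0 -{1}[(f - g) k.+1]mul1r -mulrBl mulf_eq0 subr_eq0.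
by rewrite eq_sym (negbTE (qpow_neq1 qpow_cvg0 _)) => /eqP.
Qed.

Definition qpoch_ratio x y n : fps C := qpoch_z x q n / qpoch_z y q n.

Lemma qpoch_ratioE x y n : fps_div (qpoch_z x q n) (qpoch_z y q n) = qpoch_ratio x y n.
Proof. by rewrite fps_divE ?qpoch_z_coef0 ?oner_eq0. Qed.

Lemma qpoch_ratio0 x y : qpoch_ratio x y 0 = 1.
Proof. by rewrite /qpoch_ratio !qpoch_z0 divr1. Qed.

Lemma qpoch_ratio1 x y : qpoch_ratio x y 1 = fps_lin x / fps_lin y.
Proof. by rewrite /qpoch_ratio !qpoch_z1. Qed.

Lemma qpoch_ratioD x y n m :
  qpoch_ratio x y (n + m) = qpoch_ratio x y n * fps_subst (q ^+ n) (qpoch_ratio x y m).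
Proof.
rewrite /qpoch_ratio !qpoch_zD rmorphM rmorphV ?qpoch_z_unit //=.
by rewrite invrM ?fps_subst_unit ?qpoch_z_unit //; ring.
Qed.

Lemma qpoch_ratioS x y n :
  qpoch_ratio x y n.+1 * fps_lin y = fps_lin x * fps_subst q (qpoch_ratio x y n).
Proof. by rewrite -add1n qpoch_ratioD expr1 qpoch_ratio1 mulrAC divrK ?fps_lin_unit. Qed.

Lemma qpoch_z_subst_divq x m : q != 0 -> fps_subst q (qpoch_z (x / q) q m) = qpoch_z x q m.
Proof.
move=> q0; rewrite !qpoch_zE rmorph_prod /=; apply: eq_bigr => j _.
by rewrite fps_subst_lin mulrAC divfK.
Qed.

(* The factor q^m makes this hold also for q = 0, where x / q = 0. *)
Lemma qpoch_ratio_subst_divq x y m :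
  fps_const (q ^+ m) * fps_subst q (qpoch_ratio (x / q) (y / q) m) =
  fps_const (q ^+ m) * qpoch_ratio x y m.
Proof.
have [->|q0] := eqVneq q 0.
  by case: m => [|m]; rewrite ?qpoch_ratio0 ?rmorph1 // expr0n rmorph0 !mul0r.
by rewrite /qpoch_ratio fps_substM rmorphV ?qpoch_z_unit //= !qpoch_z_subst_divq.
Qed.

Definition qpoch_inf_ratio x y : fps C := qpoch_z_inf x q / qpoch_z_inf y q.

Lemma qpoch_z_inf_unit x : qpoch_z_inf x q \is a GRing.unit.
Proof. by rewrite fps_unitE qpoch_z_inf_coef0 ?oner_eq0. Qed.

Lemma qpoch_inf_ratioE x y :
  fps_div (qpoch_z_inf x q) (qpoch_z_inf y q) = qpoch_inf_ratio x y.
Proof. exact/fps_divE/qpoch_z_inf_unit. Qed.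

Lemma qpoch_inf_ratio_coef0 x y : qpoch_inf_ratio x y 0%N = 1.
Proof.
rewrite /qpoch_inf_ratio fps_coefM0 fps_coefV0 ?qpoch_z_inf_unit //.
by rewrite !qpoch_z_inf_coef0 invr1 mulr1.
Qed.

Lemma qpoch_inf_ratio_rec x y :
  fps_lin y * qpoch_inf_ratio x y = fps_lin x * fps_subst q (qpoch_inf_ratio x y).
Proof.
rewrite /qpoch_inf_ratio rmorphM rmorphV ?qpoch_z_inf_unit //=.
rewrite {1}(qpoch_z_inf_rec qpow_cvg0 x) {1}(qpoch_z_inf_rec qpow_cvg0 y).
rewrite invrM ?fps_lin_unit ?fps_subst_unit ?qpoch_z_inf_unit //.
transitivity (fps_lin y / fps_lin y * (fps_lin x *
  (fps_subst q (qpoch_z_inf x q) / fps_subst q (qpoch_z_inf y q)))); first by ring.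
by rewrite divrr ?fps_lin_unit // mul1r.
Qed.

Lemma qpoch_inf_ratio_shift x y m :
  qpoch_ratio x y m * fps_subst (q ^+ m) (qpoch_inf_ratio x y) = qpoch_inf_ratio x y.
Proof.
elim: m => [|m IH]; first by rewrite qpoch_ratio0 expr0 fps_subst1 mul1r.
have ratio1_shift :
    qpoch_ratio x y 1 * fps_subst q (qpoch_inf_ratio x y) = qpoch_inf_ratio x y.
  by rewrite qpoch_ratio1 mulrAC -qpoch_inf_ratio_rec mulrAC divrr ?fps_lin_unit ?mul1r.
by rewrite -addn1 qpoch_ratioD addn1 exprSr -fps_subst_comp -mulrA -rmorphM /= ratio1_shift.
Qed.

End QRatio.

Section Expansion.
Variable C : numFieldType.
Variables q a b : C.
Hypothesis qpow_cvg0 : (fun N => q ^+ N) @ \oo --> (0 : C).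
Hypothesis b_neq0 : b != 0.
Local Notation X := (fpsX C).
Local Notation ratio := (qpoch_ratio q a b).

Definition kappa n := qpoch (a * q / b) q n / qpoch q q n * b ^+ n * q ^+ (n * n.-1).

Lemma kappa0 : kappa 0 = 1.
Proof. by rewrite /kappa /qpoch !big_ord0 divr1 !mulr1. Qed.

Lemma kappaS n :
  kappa n.+1 * (1 - q ^+ n.+1) = kappa n * (b - a * q ^+ n.+1) * (q ^+ n * q ^+ n).
Proof.
have qqn := qpoch_qq_neq0 qpow_cvg0 n.
have qn1 : 1 - q * q ^+ n != 0 by rewrite -exprS subr_eq0 eq_sym (qpow_neq1 qpow_cvg0).
rewrite /kappa (_ : (n.+1 * n.+1.-1 = n * n.-1 + n + n)%N); last first.
  by case: n {qqn qn1} => //= n; lia.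
by rewrite !qpochS !exprD !exprS; field; rewrite qqn qn1 b_neq0.
Qed.

Definition hterm n : fps C :=
  fps_const (kappa n) * (X ^+ n * (ratio n * fps_lin (a * q ^+ (2 * n)))).

Lemma hterm_ord : ord_ge_seq hterm.
Proof. by move=> n; rewrite /hterm; ord_ge_tac. Qed.

(* [hterm n - hterm' n] telescopes by [kappaS], and [hterm'] is built so that
   [fps_lin b * hterm' n = fps_lin a * fps_subst q (hterm n)]. *)
Definition hterm' n : fps C :=
  fps_const (kappa n * q ^+ n) * (X ^+ n * (ratio n.+1 * fps_lin (a * q ^+ (2 * n) * q))).
Definition htele n : fps C := fps_const (kappa n * (1 - q ^+ n)) * (X ^+ n * ratio n).

Lemma hterm_tele n : hterm n - hterm' n = htele n - htele n.+1.
Proof.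
have ratioSE : ratio n.+1 = qpoch_z a q n / qpoch_z b q n.+1 * fps_lin (a * q ^+ n).
  by rewrite /qpoch_ratio qpoch_zSr mulrAC.
have ratioE : ratio n = qpoch_z a q n / qpoch_z b q n.+1 * fps_lin (b * q ^+ n).
  rewrite /qpoch_ratio qpoch_zSr invrM ?qpoch_z_unit ?fps_lin_unit //.
  by rewrite [_^-1 * _]mulrC mulrA mulrVK ?fps_lin_unit.
rewrite /hterm /hterm' /htele ratioSE ratioE kappaS mul2n -addnn !exprD !exprSr /fps_lin.
by move: (kappa n) (q ^+ n) => K u; ring.
Qed.

Lemma hterm_series_eq : fps_series hterm = fps_series hterm'.
Proof.
apply/eqP; rewrite -subr_eq0 -fps_seriesB => [|n|n]; rewrite /hterm' ?/hterm; try ord_ge_tac.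
rewrite (eq_fps_series hterm_tele) fps_series_telescope => [|n]; last first.
  by rewrite /htele; ord_ge_tac.
by rewrite /htele subrr mulr0 rmorph0 mul0r.
Qed.

Lemma hterm_series_rec :
  fps_lin b * fps_series hterm = fps_lin a * fps_subst q (fps_series hterm).
Proof.
rewrite {1}hterm_series_eq fps_series_mull => [|n]; last by rewrite /hterm'; ord_ge_tac.
rewrite fps_subst_series ?fps_series_mull => [|n|n]; last 2 first.
- by rewrite /hterm; ord_ge_tac.
- exact: hterm_ord.
apply: eq_fps_series => n; rewrite /hterm /hterm' fps_subst_CXnM fps_substM fps_subst_lin.
transitivity (X ^+ n * fps_const (kappa n * q ^+ n) * fps_lin (a * q ^+ (2 * n) * q) *
  (ratio n.+1 * fps_lin b)); first by ring.
by rewrite qpoch_ratioS; ring.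
Qed.

Lemma hterm_series_coef0 : fps_series hterm 0%N = 1.
Proof.
rewrite fps_series_coef ?big_ord1; last exact: hterm_ord.
by rewrite /hterm expr0 kappa0 rmorph1 !mul1r qpoch_ratio0 mul1r fps_lin_coef0.
Qed.

Lemma qpoch_inf_ratio_series : qpoch_inf_ratio q a b = fps_series hterm.
Proof.
apply: (qdiff_eq_uniq qpow_cvg0 (qpoch_inf_ratio_rec qpow_cvg0 a b) hterm_series_rec).
by rewrite qpoch_inf_ratio_coef0 ?hterm_series_coef0.
Qed.

End Expansion.

Section Gtilde.
Variable C : numFieldType.
Variable q : C.
Implicit Types (t : nat -> C) (x y : C).

Lemma GtildeE t x y :
  Gtilde q t x y = fps_series (fun m => fps_const (t m) * (fpsX C ^+ m * qpoch_ratio q x y m)).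
Proof. by apply: eq_fps_series => m; rewrite fps_scaleE fps_XnE qpoch_ratioE. Qed.

Lemma Gtilde_subst_divq t x y :
  fps_subst q (Gtilde q t (x / q) (y / q)) = Gtilde q (fun m => t m * q ^+ m) x y.
Proof.
rewrite !GtildeE fps_subst_series => [|m]; last by ord_ge_tac.
apply: eq_fps_series => m; rewrite fps_subst_CXnM.
transitivity (fps_const (t m) * fpsX C ^+ m *
  (fps_const (q ^+ m) * fps_subst q (qpoch_ratio q (x / q) (y / q) m))); first by ring.
by rewrite qpoch_ratio_subst_divq; ring.
Qed.

End Gtilde.

Section Assembly.
Variable C : numFieldType.
Variables (q a b : C) (t : nat -> C).
Hypothesis qpow_cvg0 : (fun N => q ^+ N) @ \oo --> (0 : C).
Hypothesis b_neq0 : b != 0.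
Local Notation X := (fpsX C).
Local Notation ratio := (qpoch_ratio q a b).

Lemma rhs_summandE n :
  fps_scale (kappa q a b n)
    (fps_mul (fps_div (qpoch_z a q n) (qpoch_z b q n))
       (fps_mul (fps_Xn _ n)
          (fps_sub (fps_subst (q ^+ n) (Gtilde q t a b))
             (fps_mul (fps_scale (a * q ^+ (2 * n)) (fps_Xn _ 1))
                (fps_subst (q ^+ n.+1) (Gtilde q t (a / q) (b / q)))))))
  = fps_series (fun m =>
      fps_const (t m) * (X ^+ m * (ratio m * fps_subst (q ^+ m) (hterm q a b n)))).
Proof.
rewrite fps_scaleE !fps_mulE qpoch_ratioE fps_subE fps_scaleE !fps_XnE.
rewrite [q ^+ n.+1]exprSr -fps_subst_comp Gtilde_subst_divq !GtildeE.
rewrite !fps_subst_series ?fps_series_mull -?fps_seriesB ?fps_series_mull; try by ord_ge_tac.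
apply: eq_fps_series => m; rewrite /hterm !fps_subst_CXnM fps_substM fps_subst_lin.
have ratio_comm :
    ratio n * fps_subst (q ^+ n) (ratio m) = ratio m * fps_subst (q ^+ m) (ratio n).
  by rewrite -!qpoch_ratioD addnC.
transitivity (fps_const (kappa q a b n * t m * (q ^+ n) ^+ m) * X ^+ n * X ^+ m *
  fps_lin (a * q ^+ (2 * n) * q ^+ m) * (ratio n * fps_subst (q ^+ n) (ratio m))).
  by rewrite /fps_lin; ring.
by rewrite ratio_comm /fps_lin [(q ^+ m) ^+ n]exprAC; ring.
Qed.

Lemma qpoch_inf_ratio_mul_series :
  fps_mul (fps_div (qpoch_z_inf a q) (qpoch_z_inf b q)) t =
  fps_series (fun n =>
    fps_scale (kappa q a b n)
      (fps_mul (fps_div (qpoch_z a q n) (qpoch_z b q n))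
         (fps_mul (fps_Xn _ n)
            (fps_sub (fps_subst (q ^+ n) (Gtilde q t a b))
               (fps_mul (fps_scale (a * q ^+ (2 * n)) (fps_Xn _ 1))
                  (fps_subst (q ^+ n.+1) (Gtilde q t (a / q) (b / q)))))))).
Proof.
rewrite (eq_fps_series rhs_summandE) exchange_fps_series => [|n m]; last first.
  rewrite addnC; apply/ord_geMl; apply: ord_geM; first exact: ord_ge_Xn.
  by apply/ord_geMl/ord_ge_subst; rewrite /hterm; ord_ge_tac.
rewrite qpoch_inf_ratioE // fps_mulE {1}(fps_series_monomials t).
rewrite fps_series_mull => [|m]; last by ord_ge_tac.
apply: eq_fps_series => m; rewrite mulrC -mulrA.
rewrite -(qpoch_inf_ratio_shift qpow_cvg0 a b m) (qpoch_inf_ratio_series a qpow_cvg0 b_neq0).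
by rewrite fps_subst_series ?fps_series_mull; try ord_ge_tac.
Qed.

End Assembly.

Local Open Scope complex_scope.

(* The cast equips R[i] with the topology of its normed field structure. *)
Lemma complex_qpow_cvg0 (R : realType) (q : (R[i] : numFieldType)) :
  `|q| < 1 -> (fun N => q ^+ N) @ \oo --> 0.
Proof.
move=> q1; have [r normq] := complex_realP _ (normr_real q).
have r_ge0 : 0 <= r by rewrite -lecR -normq normr_ge0.
have rN0 : (fun N => r ^+ N) @ \oo --> (0 : R).
  by apply: cvg_expr; rewrite ger0_norm // -ltcR -normq.
apply/cvgr0Pnorm_lt => e; rewrite ltcE /= => /andP[/eqP Ime Ree].
apply: filterS ((cvgr0Pnorm_lt _).1 rN0 _ Ree) => N /= rN.
rewrite normrX normq -rmorphXn ltcE /= Ime eqxx /=.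
exact: le_lt_trans (ler_norm _) rN.
Qed.

Unset Implicit Arguments.

Theorem theorem1p2 (R : realType) (a b q : R[i]) (t : nat -> R[i]) :
  `|q| < 1 -> b != 0 ->
  let G : fps R[i] := t in
  fps_mul (fps_div (qpoch_z_inf a q) (qpoch_z_inf b q)) G =
  fps_series (fun n : nat =>
    fps_scale (qpoch (a * q / b) q n / qpoch q q n * b ^+ n * q ^+ (n * n.-1))
      (fps_mul (fps_div (qpoch_z a q n) (qpoch_z b q n))
         (fps_mul (fps_Xn _ n)
            (fps_sub (fps_subst (q ^+ n) (Gtilde q t a b))
               (fps_mul (fps_scale (a * q ^+ (2 * n)) (fps_Xn _ 1))
                  (fps_subst (q ^+ n.+1) (Gtilde q t (a / q) (b / q)))))))).
Proof.
move=> q_lt1 b_neq0 G.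
exact: qpoch_inf_ratio_mul_series (complex_qpow_cvg0 q_lt1) b_neq0.
Qed.
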